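(* Let $\epsilon>0$ and let $H$ be a $3$-graph on $n$ vertices. Then there exists a sub-$3$-graph $H_\epsilon$ of $H$ (with $V(H_\epsilon)\subseteq V(H)$ and $E(H_\epsilon)\subseteq E(H)$) such that (i) $|V(H)\setminus V(H_\epsilon)|\le 3\epsilon n$; (ii) $\deg_{H_\epsilon}(v)\ge \deg_H(v)-7\epsilon\binom n2$ for every $v\in V(H_\epsilon)$; (iii) $\deg_H(S)>\epsilon^2 n$ for every pair $S\in\partial H_\epsilon$.
   Context: For a $3$-graph $H$ and a set $S$ of one or two vertices, $\deg_H(S)$ is the number of edges of $H$ containing $S$ (for a vertex $v$, $\deg_H(v)=\deg_H(\{v\})$). The shadow $\partial G$ of a $3$-graph $G$ is the set of pairs of vertices contained in at least one edge of $G$. *)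

From mathcomp Require Import all_boot all_order all_algebra.
Set Implicit Arguments. Unset Strict Implicit. Unset Printing Implicit Defensive.

Definition is_3graph (T : finType) (H : {set {set T}}) : Prop :=
  forall e, e \in H -> #|e| = 3.

Definition deg (T : finType) (H : {set {set T}}) (S : {set T}) : nat :=
  #|[set e in H | S \subset e]|.

Definition shadow (T : finType) (H : {set {set T}}) : {set {set T}} :=
  [set S : {set T} | (#|S| == 2) && [exists e in H, S \subset e]].

From mathcomp Require Import all_boot all_order all_algebra.
From mathcomp Require Import ring lra.
Import Order.TTheory GRing.Theory Num.Theory.

Set Implicit Arguments.
Unset Strict Implicit.
Unset Printing Implicit Defensive.

(* Call a pair light if its codegree is at most eps^2 n, and an edge spoiled if
   it contains a light pair.  There are at most C(n,2) light pairs, so at most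
   eps^2 n C(n,2) spoiled edges; by double counting fewer than 3 eps n vertices
   lie in more than eps C(n,2) spoiled edges.  Deleting those vertices and all
   spoiled edges leaves H_eps: its shadow consists of heavy pairs, and a kept
   vertex v loses at most eps C(n,2) spoiled edges plus, since every pair has
   codegree at most n - 1, at most 3 eps n (n - 1) = 6 eps C(n,2) edges meeting
   a deleted vertex. *)

Lemma card_set_sum (I : finType) (A : {pred I}) (P : pred I) :
  #|[set x in A | P x]| = \sum_(x in A) P x.
Proof.
by rewrite -sum1dep_card big_mkcondr /=; apply: eq_bigr => x _; case: (P x).
Qed.

Lemma leq_card_bigcup (I T : finType) (P : pred I) (F : I -> {set T}) :
  #|\bigcup_(i | P i) F i| <= \sum_(i | P i) #|F i|.
Proof.
elim/big_rec2: _ => [|i m U _ le]; first by rewrite cards0.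
exact: leq_trans (leq_card_setU _ _).1 (leq_add _ le).
Qed.

Section Degrees.

Variable T : finType.
Implicit Types (H B : {set {set T}}) (W : {set T}).

Lemma sum_deg1 B : \sum_v deg B [set v] = \sum_(e in B) #|e|.
Proof.
under eq_bigr do rewrite /deg card_set_sum.
rewrite exchange_big /=; apply: eq_bigr => e _.
rewrite -sum1_card [RHS]big_mkcond; apply: eq_bigr => v _.
by rewrite sub1set; case: (v \in e).
Qed.

Lemma sum_deg1_3graph B : is_3graph B -> \sum_v deg B [set v] = 3 * #|B|.
Proof.
by move=> B3; rewrite sum_deg1 (eq_bigr (fun _ => 3)) ?sum_nat_const 1?mulnC.
Qed.

Lemma is_3graph_sub H B : B \subset H -> is_3graph H -> is_3graph B.
Proof. by move=> /subsetP BH H3 e /BH; apply: H3. Qed.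

Lemma leq_deg2_3graph H u v :
  is_3graph H -> u != v -> deg H [set u; v] <= #|T|.-1.
Proof.
move=> H3 uv; rewrite -(cardsC1 u).
apply: leq_trans (leq_imset_card (fun w => [set u; v] :|: [set w]) _).
apply/subset_leq_card/subsetP => e; rewrite inE => /andP[eH uve].
have /cards1P[w ew] : #|e :\: [set u; v]| == 1.
  by rewrite cardsDS // H3 // cards2 uv.
have /setDP[_] : w \in e :\: [set u; v] by rewrite ew set11.
rewrite !inE => /norP[wu _]; apply/imsetP; exists w; first by rewrite !inE.
by rewrite -ew -{1}(setID e [set u; v]) (setIidPr uve).
Qed.

Lemma leq_deg1_split H B W v :
  deg H [set v] <=
    deg B [set v] + \sum_(u in ~: W) deg H [set u; v]
    + deg [set e in H :\: B | e \subset W] [set v].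
Proof.
pose X := \bigcup_(u in ~: W) [set e in H | [set u; v] \subset e].
pose F := [set e in H :\: B | e \subset W].
have leX : #|X| <= \sum_(u in ~: W) deg H [set u; v] by apply: leq_card_bigcup.
have cover : [set e in H | [set v] \subset e] \subset
    ([set e in B | [set v] \subset e] :|: X) :|: [set e in F | [set v] \subset e].
  apply/subsetP => e; rewrite !inE sub1set => /andP[eH ve].
  have [_|_] := boolP (e \in B); first by rewrite ve.
  have [eW|/subsetPn[u ue uW]] := boolP (e \subset W); first by rewrite eH ve orbT.
  apply/orP; left; apply/orP; right; apply/bigcupP; exists u; first by rewrite inE.
  by rewrite inE eH subUset !sub1set ue ve.
apply: leq_trans (subset_leq_card cover) _.
apply: leq_trans (leq_card_setU _ _).1 _; rewrite leq_add2r.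
by apply: leq_trans (leq_card_setU _ _).1 _; rewrite leq_add2l.
Qed.

End Degrees.

Local Open Scope ring_scope.

Section Cleaning.

Variables (R : realFieldType) (T : finType) (eps : R) (H : {set {set T}}).
Hypotheses (eps_gt0 : 0 < eps) (H3 : is_3graph H).

Local Notation n := #|T|.
Local Notation pairs := 'C(#|T|, 2).

Definition light_pair (S : {set T}) : bool :=
  (#|S| == 2)%N && ((deg H S)%:R <= eps ^+ 2 * n%:R).

Definition spoiled_edges : {set {set T}} :=
  \bigcup_(S | light_pair S) [set e in H | S \subset e].

Definition core : {set T} :=
  [set v | (deg spoiled_edges [set v])%:R <= eps * pairs%:R].

Definition core_edges : {set {set T}} :=
  [set e in H :\: spoiled_edges | e \subset core].

Lemma spoiled_edges_sub : spoiled_edges \subset H.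
Proof. by apply/bigcupsP => S _; apply/subsetP => e; rewrite inE => /andP[]. Qed.

Lemma card_light_pairs : (#|light_pair| <= pairs)%N.
Proof.
rewrite -card_draws; apply/subset_leq_card/subsetP => S.
by rewrite !inE => /andP[].
Qed.

Lemma card_spoiled_edges : #|spoiled_edges|%:R <= pairs%:R * (eps ^+ 2 * n%:R).
Proof.
apply: le_trans (_ : (\sum_(S | light_pair S) deg H S)%:R <= _).
  by rewrite ler_nat leq_card_bigcup.
rewrite natr_sum.
apply: le_trans (_ : \sum_(S | light_pair S) eps ^+ 2 * n%:R <= _).
  by apply: ler_sum => S /andP[].
rewrite sumr_const -(mulr_natl (eps ^+ 2 * n%:R)).
apply: ler_wpM2r; last by rewrite ler_nat card_light_pairs.
by rewrite mulr_ge0 ?sqr_ge0.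
Qed.

Lemma sum_deg_spoiled_not_core :
  \sum_(v in ~: core) (deg spoiled_edges [set v])%:R
    <= 3 * eps * n%:R * (eps * pairs%:R).
Proof.
apply: le_trans (_ : (\sum_v deg spoiled_edges [set v])%:R <= _).
  by rewrite -natr_sum ler_nat [X in (_ <= X)%N](bigID (mem (~: core))) leq_addr.
rewrite sum_deg1_3graph ?natrM; last exact: is_3graph_sub spoiled_edges_sub H3.
have := card_spoiled_edges; have := eps_gt0; nra.
Qed.

Lemma card_not_core : #|~: core|%:R <= 3 * eps * n%:R.
Proof.
have [->|[v0 v0_out]] := set_0Vmem (~: core); first by rewrite cards0 !mulr_ge0 // ltW.
(* Strictness is what rules out the degenerate case pairs = 0. *)
have lt_sum : (eps * pairs%:R) *+ #|~: core|
    < \sum_(v in ~: core) (deg spoiled_edges [set v])%:R.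
  rewrite -sumr_const; apply: ltr_sum.
    by apply/hasP; exists v0; rewrite ?mem_index_enum.
  by move=> v; rewrite !inE -ltNge.
have x_ge0 : 0 <= eps * pairs%:R by rewrite mulr_ge0 // ltW.
by move: lt_sum (sum_deg_spoiled_not_core) x_ge0; rewrite -mulr_natr; nra.
Qed.

Lemma sum_deg2_not_core v : v \in core ->
  (\sum_(u in ~: core) deg H [set u; v] <= #|~: core| * n.-1)%N.
Proof.
move=> v_core; rewrite -sum_nat_const; apply: leq_sum => u u_out.
by apply: leq_deg2_3graph => //; apply: contraTneq u_out => ->; rewrite inE v_core.
Qed.

Lemma not_core_pairs : (#|~: core| * n.-1)%:R <= 6 * (eps * pairs%:R).
Proof.
have n_pairs : n%:R * n.-1%:R = 2 * pairs%:R :> R.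
  by rewrite -natrM -[n.-1]bin1 mul_bin_diag natrM.
rewrite natrM; apply: le_trans (ler_wpM2r (ler0n _ _) card_not_core) _.
by rewrite -!mulrA n_pairs; lra.
Qed.

Lemma deg_core_edges v : v \in core ->
  (deg H [set v])%:R - 7 * eps * pairs%:R <= (deg core_edges [set v])%:R.
Proof.
move=> v_core; have := leq_deg1_split H spoiled_edges core v.
rewrite -(ler_nat R) !natrD => split_deg.
have spoiled_v : (deg spoiled_edges [set v])%:R <= eps * pairs%:R.
  by move: v_core; rewrite inE.
have := le_trans (eqbRL (ler_nat R _ _) (sum_deg2_not_core v_core))
  not_core_pairs.
move: split_deg spoiled_v; lra.
Qed.

Lemma shadow_core_edges S :
  S \in shadow core_edges -> eps ^+ 2 * n%:R < (deg H S)%:R.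
Proof.
rewrite inE => /andP[S2 /existsP[e /andP[]]].
rewrite !inE => /andP[/andP[e_ok eH] _] Se.
rewrite ltNge; apply: contraNN e_ok => S_light.
by apply/bigcupP; exists S; rewrite /light_pair ?S2 // inE eH.
Qed.

End Cleaning.

Theorem lemma3p3 (R : realFieldType) (T : finType) (eps : R) (H : {set {set T}}) :
  0 < eps -> is_3graph H ->
  exists (W : {set T}) (F : {set {set T}}),
    [/\ F \subset H,
        (forall e, e \in F -> e \subset W),
        (#|~: W|%:R <= 3 * eps * #|T|%:R),
        (forall v, v \in W ->
           (deg H [set v])%:R - 7 * eps * ('C(#|T|, 2))%:R <= (deg F [set v])%:R)
      & (forall S, S \in shadow F -> eps ^+ 2 * #|T|%:R < (deg H S)%:R)].
Proof.
move=> eps_gt0 H3; exists (core eps H), (core_edges eps H); split.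
- by apply/subsetP => e; rewrite !inE => /andP[/andP[]].
- by move=> e; rewrite inE => /andP[].
- exact: card_not_core.
- exact: deg_core_edges.
- exact: shadow_core_edges.
Qed.
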